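(* Let $(X,Y)\sim\mathcal D$ with $Y\in[0,1]^d$, $f:\mathcal X\to[0,1]^d$ a forecaster, $\mathcal A$ a finite action set and $u(a,v)$ a utility linear in $v$. Let $\{B_1,\ldots,B_J\}$ be a partition of the forecast range $[0,1]^d$ into measurable bins and $\mathcal H_{\mathrm{bin}}=\{\mathbf 1_{B_j}: j=1,\ldots,J\}$. Suppose $f$ is $\mathcal H_{\mathrm{bin}}$-calibrated: $\mathbb E[\mathbf 1_{\{f(X)\in B_j\}}(Y-f(X))]=0$ for $j=1,\ldots,J$. Let $$m_j:=\mathbb E[f(X)\mid f(X)\in B_j]=\mathbb E[Y\mid f(X)\in B_j].$$ Consider the robust problem $\max_{a(\cdot)}\min_{q\in\mathcal Q}\mathbb E[u(a(f(X)),q(f(X)))]$ over measurable policies $a(\cdot):[0,1]^d\to\mathcal A$, where $\mathcal Q=\{q:[0,1]^d\to[0,1]^d\mid \mathbb E[\mathbf 1_{B_j}(f(X))(q(f(X))-f(X))]=0,\ j=1,\ldots,J\}$. Then the worst-case belief (a minimizer $q^\star\in\mathcal Q$ of $\mathbb E[\max_{a\in\mathcal A}u(a,q(f(X)))]$) is piecewise constant, $q^\star(v)=m_j$ for $v\in B_j$ (a.e.), and the robust action best-responds to the bin mean: $a_{\mathrm{robust}}(v)\in\arg\max_{a\in\mathcal A}u(a,m_j)$ for $v\in B_j$ (a.e.).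
   Context: Bins $B_j$ are assumed to have positive probability under the distribution of $f(X)$ (bins of probability zero are immaterial). ''a.e.'' refers to the distribution of $f(X)$. *)

From HB Require Import structures.
From mathcomp Require Import all_boot all_order all_algebra.
From mathcomp Require Import all_classical all_reals all_analysis.
Set Implicit Arguments. Unset Strict Implicit. Unset Printing Implicit Defensive.
Import Order.TTheory GRing.Theory Num.Theory.
Local Open Scope classical_set_scope.
Local Open Scope ring_scope.

(* Vectors of R^d are represented by d.-tuple R, which carries the product
   (Borel) sigma-algebra generated by the coordinates (measurable_structure.v). *)

Section defs.
Variables (R : realType) (d : nat).

Definition cube : set (d.-tuple R) :=
  [set v | forall i : 'I_d, 0 <= tnth v i <= 1].

Definition tadd (v w : d.-tuple R) : d.-tuple R :=
  [tuple tnth v i + tnth w i | i < d].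
Definition tscale (s : R) (v : d.-tuple R) : d.-tuple R :=
  [tuple s * tnth v i | i < d].

Definition linear_in_v (A : Type) (u : A -> d.-tuple R -> R) :=
  forall a (s : R) (v w : d.-tuple R),
    u a (tadd (tscale s v) w) = s * u a v + u a w.

Definition measurable_partition (J : nat) (B : 'I_J -> set (d.-tuple R)) :=
  [/\ (forall j, measurable (B j)),
      (forall j k, j != k -> B j `&` B k = set0) &
      \bigcup_(j in [set: 'I_J]) B j = cube].

Definition measurable_policy (A : finType) (a : d.-tuple R -> A) :=
  forall x : A, measurable (a @^-1` [set x]).

Definition vmax (A : finType) (u : A -> d.-tuple R -> R) (v : d.-tuple R)
  : \bar R := \big[Order.max/-oo%E]_(a : A) (u a v)%:E.

Section probability_defs.
Variables (dO : measure_display) (Omega : measurableType dO)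
  (P : probability Omega R) (V : Omega -> d.-tuple R).
(* V stands for f(X) *)

Definition Eon (B : set (d.-tuple R)) (g : Omega -> R) : \bar R :=
  (\int[P]_w (\1_B (V w) * g w)%:E)%E.

Definition cond_mean (B : set (d.-tuple R)) (Z : Omega -> d.-tuple R)
  : d.-tuple R :=
  [tuple fine (Eon B (fun w => tnth (Z w) i)) / fine (P (V @^-1` B)) | i < d].

Definition Qset (J : nat) (B : 'I_J -> set (d.-tuple R))
  : set (d.-tuple R -> d.-tuple R) :=
  [set q | [/\ measurable_fun [set: d.-tuple R] q,
              q @` cube `<=` cube &
              forall (j : 'I_J) (i : 'I_d),
                Eon (B j) (fun w => tnth (q (V w)) i - tnth (V w) i) = 0%E]].

Definition payoff (A : finType) (u : A -> d.-tuple R -> R)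
  (a : d.-tuple R -> A) (q : d.-tuple R -> d.-tuple R) : \bar R :=
  (\int[P]_w (u (a (V w)) (q (V w)))%:E)%E.

Definition robust_value (A : finType) (u : A -> d.-tuple R -> R) (J : nat)
  (B : 'I_J -> set (d.-tuple R)) (a : d.-tuple R -> A) : \bar R :=
  ereal_inf [set payoff u a q | q in Qset B].

Definition robust_optimal (A : finType) (u : A -> d.-tuple R -> R) (J : nat)
  (B : 'I_J -> set (d.-tuple R)) (a : d.-tuple R -> A) : Prop :=
  measurable_policy a /\
  forall a' : d.-tuple R -> A, measurable_policy a' ->
    (robust_value u B a' <= robust_value u B a)%E.

Definition worst_obj (A : finType) (u : A -> d.-tuple R -> R)
  (q : d.-tuple R -> d.-tuple R) : \bar R :=
  (\int[P]_w vmax u (q (V w)))%E.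

End probability_defs.

Definition pw_const (J : nat) (B : 'I_J -> set (d.-tuple R))
  (m : 'I_J -> d.-tuple R) (v : d.-tuple R) : d.-tuple R :=
  [tuple \sum_(j < J) \1_(B j) v * tnth (m j) i | i < d].

End defs.

From HB Require Import structures.
From mathcomp Require Import all_boot all_order all_algebra.
From mathcomp Require Import all_classical all_reals all_analysis.
From mathcomp Require Import measurable_realfun ring.
Set Implicit Arguments. Unset Strict Implicit. Unset Printing Implicit Defensive.
Import Order.TTheory GRing.Theory Num.Theory.
Local Open Scope classical_set_scope.
Local Open Scope ring_scope.

(* Since u is linear in the belief, against any belief q in Q the expected
   utility of an action on the bin B_j depends on q only through its bin mean,
   which Q pins down to m_j.  Hence E[max_a u(a, q)] >= sum_j P(B_j) max_a u(a, m_j),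
   with equality for the piecewise-constant q* = m_j.  The policy best-responding
   to m_j on B_j earns exactly this value against every q in Q, while any policy
   earns at most this value against q*; so it is robust-optimal, and an optimal
   policy has zero expected regret against q*, which (A being finite, the regret
   is bounded away from 0 where it is positive) forces it to best-respond to m_j
   almost everywhere. *)

Section bounded_measurable.
Context {dT : measure_display} {T : measurableType dT} {R : realType}.

Definition bounded_measurable (g : T -> R) :=
  measurable_fun setT g /\ exists M : R, forall t, `|g t| <= M.

Lemma bounded_measurable_cst c : bounded_measurable (fun _ => c).
Proof. by split; [exact: measurable_cst | exists `|c|]. Qed.

Lemma bounded_measurableD f g : bounded_measurable f -> bounded_measurable g ->
  bounded_measurable (fun t => f t + g t).
Proof.
move=> [mf [M hM]] [mg [N hN]]; split; first exact: measurable_funD.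
by exists (M + N) => t; apply: le_trans (ler_normD _ _) _; exact: lerD.
Qed.

Lemma bounded_measurableB f g : bounded_measurable f -> bounded_measurable g ->
  bounded_measurable (fun t => f t - g t).
Proof.
move=> [mf [M hM]] [mg [N hN]]; split; first exact: measurable_funB.
by exists (M + N) => t; apply: le_trans (ler_normB _ _) _; exact: lerD.
Qed.

Lemma bounded_measurableM f g : bounded_measurable f -> bounded_measurable g ->
  bounded_measurable (fun t => f t * g t).
Proof.
move=> [mf [M hM]] [mg [N hN]]; split; first exact: measurable_funM.
by exists (M * N) => t; rewrite normrM; exact: ler_pM.
Qed.

Lemma bounded_measurable_sum (I : Type) (s : seq I) (F : I -> T -> R) :
  (forall i, bounded_measurable (F i)) ->
  bounded_measurable (fun t => \sum_(i <- s) F i t).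
Proof.
move=> bF; elim: s => [|i s ih].
  by under eq_fun do rewrite big_nil; exact: bounded_measurable_cst.
by under eq_fun do rewrite big_cons; exact: bounded_measurableD.
Qed.

Lemma bounded_measurable_indic (dU : measure_display) (U : measurableType dU)
    (Z : T -> U) (S : set U) :
  measurable_fun setT Z -> measurable S ->
  bounded_measurable (fun t => \1_S (Z t)).
Proof.
move=> mZ mS; split; first exact: measurableT_comp (measurable_indic mS) mZ.
by exists 1 => t; rewrite indicE; case: (_ \in _); rewrite ?normr1 ?normr0.
Qed.

Lemma measurable_fun_fiberwise (A : finType) (a : T -> A) (F : A -> T -> R) :
  (forall x, measurable (a @^-1` [set x])) ->
  (forall x, measurable_fun setT (F x)) ->
  measurable_fun setT (fun t => F (a t) t).
Proof.
move=> ma mF.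
have -> : (fun t => F (a t) t) =
    (fun t => \sum_(x : A) \1_(a @^-1` [set x]) t * F x t).
  apply: funext => t; rewrite (bigD1 (a t)) //= big1 ?addr0.
    by rewrite indicE mem_set // mul1r.
  by move=> x xa; rewrite indicE memNset ?mul0r // => /= ax; rewrite ax eqxx in xa.
by apply: measurable_sum => x; apply: measurable_funM => //; exact: measurable_indic.
Qed.

Lemma measurable_fibers_locally_constant (I A : finType) (S : I -> set T)
    (a : T -> A) :
  (forall i, measurable (S i)) -> (forall t, exists i, S i t) ->
  (forall i, exists c, forall t, S i t -> a t = c) ->
  forall x, measurable (a @^-1` [set x]).
Proof.
move=> mS coverS cstS x.
have -> : a @^-1` [set x] = \bigcup_(i in setT) (S i `&` a @^-1` [set x]).
  apply/seteqP; split => [t axt|t [i _ []] //].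
  by have [i Sit] := coverS t; exists i.
apply: fin_bigcup_measurable => // i _; have [c ac] := cstS i.
have [<-|cx] := eqVneq c x.
  suff -> : S i `&` a @^-1` [set c] = S i by [].
  by apply/seteqP; split => [t []//|t Sit]; split => //; exact: ac.
suff -> : S i `&` a @^-1` [set x] = set0 by [].
by apply/seteqP; split => // t [Sit /= axt]; rewrite -(ac t Sit) axt eqxx in cx.
Qed.

End bounded_measurable.

Section expectR.
Context (R : realType) (dO : measure_display) (Omega : measurableType dO)
  (P : probability Omega R).

Definition expectR (g : Omega -> R) : R := Rintegral P setT g.

Lemma integrable_bounded_measurable g :
  bounded_measurable g -> P.-integrable setT (EFin \o g).
Proof.
move=> [mg [M hM]]; apply: measurable_bounded_integrable => //.
  by rewrite -ge0_fin_numE // fin_num_measure.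
exists M; split; first exact: num_real.
by move=> M' MM' t _ /=; apply: le_trans (hM t) _; exact: ltW.
Qed.

Lemma expectRE g : bounded_measurable g ->
  (\int[P]_w (g w)%:E = (expectR g)%:E)%E.
Proof.
move=> bg; rewrite /expectR /Rintegral fineK //.
exact: integrable_fin_num (integrable_bounded_measurable bg).
Qed.

Lemma expectRD f g : bounded_measurable f -> bounded_measurable g ->
  expectR (fun w => f w + g w) = expectR f + expectR g.
Proof. by move=> bf bg; rewrite /expectR RintegralD //; exact: integrable_bounded_measurable. Qed.

Lemma expectRB f g : bounded_measurable f -> bounded_measurable g ->
  expectR (fun w => f w - g w) = expectR f - expectR g.
Proof. by move=> bf bg; rewrite /expectR RintegralB //; exact: integrable_bounded_measurable. Qed.

Lemma expectRZl c f : bounded_measurable f ->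
  expectR (fun w => c * f w) = c * expectR f.
Proof. by move=> bf; rewrite /expectR RintegralZl //; exact: integrable_bounded_measurable. Qed.

Lemma expectR_cst c : expectR (fun _ => c) = c.
Proof. by rewrite /expectR Rintegral_cst // [X in fine X]probability_setT mulr1. Qed.

Lemma expectR_sum (I : Type) (s : seq I) (F : I -> Omega -> R) :
  (forall i, bounded_measurable (F i)) ->
  expectR (fun w => \sum_(i <- s) F i w) = \sum_(i <- s) expectR (F i).
Proof.
move=> bF; elim: s => [|i s ih].
  by under eq_fun do rewrite big_nil; rewrite big_nil expectR_cst.
under eq_fun do rewrite big_cons.
by rewrite expectRD ?ih ?big_cons //; exact: bounded_measurable_sum.
Qed.

Lemma le_expectR f g : bounded_measurable f -> bounded_measurable g ->
  (forall w, f w <= g w) -> expectR f <= expectR g.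
Proof. by move=> bf bg fg; apply: le_Rintegral => //; exact: integrable_bounded_measurable. Qed.

Lemma expectR_indic (S : set Omega) : measurable S -> expectR (\1_S) = fine (P S).
Proof. by move=> mS; rewrite /expectR /Rintegral integral_indic // setIT. Qed.

(* Markov: [c * P S <= E[g]] *)
Lemma null_set_expectR_le0 (c : R) (S : set Omega) g :
  0 < c -> measurable S -> bounded_measurable g ->
  (forall w, c * \1_S w <= g w) -> expectR g <= 0 -> P S = 0%E.
Proof.
move=> c0 mS bg cSg Eg0.
have bS : bounded_measurable (\1_S : Omega -> R).
  split; first exact: measurable_indic.
  by exists 1 => w; rewrite indicE; case: (_ \in _); rewrite ?normr1 ?normr0.
have cPS : c * fine (P S) <= 0.
  rewrite -expectR_indic // -expectRZl //; apply: le_trans Eg0.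
  by apply: le_expectR => //; apply: bounded_measurableM bS; exact: bounded_measurable_cst.
have PS0 : fine (P S) = 0.
  by apply/eqP; rewrite eq_le -(pmulr_rle0 _ c0) cPS fine_ge0.
by rewrite -[LHS]fineK ?PS0 // fin_num_measure.
Qed.

End expectR.

Section linear_utility.
Context (R : realType) (d : nat).
Implicit Types v w : d.-tuple R.

Definition tzero : d.-tuple R := [tuple 0 | _ < d].
Definition tbasis (i : 'I_d) : d.-tuple R := [tuple (i == k)%:R | k < d].

Lemma tnth_tadd v w i : tnth (tadd v w) i = tnth v i + tnth w i.
Proof. exact: tnth_mktuple. Qed.

Lemma tnth_tscale s v i : tnth (tscale s v) i = s * tnth v i.
Proof. exact: tnth_mktuple. Qed.

Lemma tuple_basis_decomp v :
  v = \big[@tadd R d/tzero]_(i < d) tscale (tnth v i) (tbasis i).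
Proof.
apply: eq_from_tnth => k.
rewrite (big_morph (fun t => tnth t k) (id1 := 0) (op1 := +%R)); last 2 first.
- by move=> x y; rewrite tnth_tadd.
- by rewrite tnth_mktuple.
rewrite (bigD1 k) //= big1 ?addr0; first by rewrite tnth_tscale tnth_mktuple eqxx mulr1.
by move=> i /negPf ik; rewrite tnth_tscale tnth_mktuple ik mulr0.
Qed.

Section linear_in_v.
Context (A : Type) (u : A -> d.-tuple R -> R) (hu : linear_in_v u).

Lemma linear_in_v0 a : u a tzero = 0.
Proof.
have := hu a 1 tzero tzero.
have -> : tadd (tscale 1 tzero) tzero = tzero.
  by apply: eq_from_tnth => k; rewrite tnth_tadd tnth_tscale !tnth_mktuple mulr0 addr0.
by rewrite mul1r => /eqP; rewrite -subr_eq subrr eq_sym => /eqP.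
Qed.

Lemma linear_in_vD a v w : u a (tadd v w) = u a v + u a w.
Proof.
have v1 : tscale 1 v = v by apply: eq_from_tnth => k; rewrite tnth_tscale mul1r.
by rewrite -{1}v1 hu mul1r.
Qed.

Lemma linear_in_vZ a s v : u a (tscale s v) = s * u a v.
Proof.
have <- : tadd (tscale s v) tzero = tscale s v.
  by apply: eq_from_tnth => k; rewrite tnth_tadd [tnth tzero k]tnth_mktuple addr0.
by rewrite hu linear_in_v0 addr0.
Qed.

Lemma linear_in_v_coordE a v : u a v = \sum_(i < d) tnth v i * u a (tbasis i).
Proof.
rewrite {1}(tuple_basis_decomp v).
rewrite (big_morph (u a) (id1 := 0) (op1 := +%R)); last 2 first.
- by move=> x y; rewrite linear_in_vD.
- by rewrite linear_in_v0.
by apply: eq_bigr => i _; rewrite linear_in_vZ.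
Qed.

End linear_in_v.

Lemma linear_in_v_bounded_cube (A : finType) (u : A -> d.-tuple R -> R) :
  linear_in_v u -> exists K, forall a v, cube v -> `|u a v| <= K.
Proof.
move=> hu; exists (\sum_(a : A) \sum_(i < d) `|u a (tbasis i)|) => a v cv.
apply: le_trans (_ : \sum_(i < d) `|u a (tbasis i)| <= _); last first.
  by rewrite (bigD1 a) //= lerDl; apply: sumr_ge0 => b _; exact: sumr_ge0.
rewrite linear_in_v_coordE //; apply: le_trans (ler_norm_sum _ _ _) _.
apply: ler_sum => i _; rewrite normrM; apply: ler_piMl => //.
by have /andP[vi0 vi1] := cv i; rewrite ger0_norm.
Qed.

End linear_utility.

Section best_response.
Context (R : realType) (d : nat) (A : finType) (a0 : A) (u : A -> d.-tuple R -> R).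

Definition best_resp (v : d.-tuple R) : A :=
  Order.arg_max a0 xpredT (fun b => u b v).

Definition max_util (v : d.-tuple R) : R := u (best_resp v) v.

Lemma le_max_util b v : u b v <= max_util v.
Proof. by rewrite /max_util /best_resp; case: arg_maxP => //= a _; apply. Qed.

Lemma max_util_bigmax v : max_util v = \big[Order.max/u a0 v]_b u b v.
Proof.
apply: le_anti; rewrite le_bigmax /=.
by apply: bigmax_le => [|b _]; exact: le_max_util.
Qed.

Lemma vmaxE v : vmax u v = (max_util v)%:E.
Proof.
apply: le_anti; apply/andP; split; last exact: le_bigmax.
by apply: bigmax_le => [|b _]; rewrite ?leNye ?lee_fin ?le_max_util.
Qed.

Lemma max_util_gap v :
  exists2 e, 0 < e & forall b, u b v < max_util v -> e <= max_util v - u b v.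
Proof.
exists (\big[Order.min/1]_(b | u b v < max_util v) (max_util v - u b v)).
  by apply: lt_bigmin => // b; rewrite subr_gt0.
by move=> b ltb; exact: bigmin_le_cond.
Qed.

End best_response.

Section partition.
Context (R : realType) (d J : nat) (B : 'I_J -> set (d.-tuple R))
  (hB : measurable_partition B).
Implicit Types v : d.-tuple R.

Lemma measurable_bin j : measurable (B j).
Proof. by case: hB. Qed.

Lemma bin_sub_cube j v : B j v -> cube v.
Proof. by case: hB => _ _ <- Bv; exists j. Qed.

Lemma cube_sub_bins v : cube v -> exists j, B j v.
Proof. by case: hB => _ _ <- [j _ Bv]; exists j. Qed.

Lemma measurable_cube : measurable (@cube R d).
Proof. by case: hB => _ _ <-; apply: fin_bigcup_measurable => // j _; exact: measurable_bin. Qed.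

Lemma bin_uniq j k v : B j v -> B k v -> j = k.
Proof.
move=> Bjv Bkv; apply/eqP/negP => /negP jk.
by case: hB => _ /(_ j k jk) jk0 _; have : (B j `&` B k) v by []; rewrite jk0.
Qed.

Lemma sum_indic_bins_mul j v (x : 'I_J -> R) :
  B j v -> \sum_k \1_(B k) v * x k = x j.
Proof.
move=> Bjv; rewrite (bigD1 j) //= big1 ?addr0; first by rewrite indicE mem_set ?mul1r.
move=> k kj; rewrite indicE memNset ?mul0r // => Bkv.
by rewrite (bin_uniq Bjv Bkv) eqxx in kj.
Qed.

Lemma sum_indic_bins v : cube v -> \sum_k \1_(B k) v = 1 :> R.
Proof.
move=> /cube_sub_bins[j Bjv].
by under eq_bigr do rewrite -[\1_(B _) v]mulr1; rewrite (sum_indic_bins_mul (fun=> 1) Bjv).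
Qed.

Section pw_const.
Context (m : 'I_J -> d.-tuple R).

Lemma pw_const_bin j v : B j v -> pw_const B m v = m j.
Proof.
move=> Bjv; apply: eq_from_tnth => i.
by rewrite tnth_mktuple (sum_indic_bins_mul (fun k => tnth (m k) i) Bjv).
Qed.

Lemma pw_const_out v : ~ cube v -> pw_const B m v = tzero R d.
Proof.
move=> ncv; apply: eq_from_tnth => i; rewrite !tnth_mktuple big1 // => k _.
by rewrite indicE memNset ?mul0r // => /bin_sub_cube.
Qed.

Lemma indic_bin_mul_pw_const (F : d.-tuple R -> R) j v :
  \1_(B j) v * F (pw_const B m v) = \1_(B j) v * F (m j).
Proof.
have [Bjv|nBjv] := pselect (B j v); first by rewrite (pw_const_bin Bjv).
by rewrite indicE memNset // !mul0r.
Qed.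

Lemma pw_const_cube v : (forall j, cube (m j)) -> cube v -> cube (pw_const B m v).
Proof. by move=> cm /cube_sub_bins[j Bjv]; rewrite (pw_const_bin Bjv). Qed.

Lemma measurable_pw_const : measurable_fun setT (pw_const B m).
Proof.
apply/measurable_fun_tnthP => i.
have -> : @tnth d R ^~ i \o pw_const B m = fun v => \sum_k \1_(B k) v * tnth (m k) i.
  by apply: funext => v; rewrite /= tnth_mktuple.
apply: measurable_sum => k; apply: measurable_funM => //.
exact: measurable_indic (measurable_bin k).
Qed.

(* [pw_const B m] takes one value on each bin and [tzero] off the cube *)
Lemma measurable_policy_comp_pw_const (A : finType) (g : d.-tuple R -> A) :
  measurable_policy (g \o pw_const B m).
Proof.
apply: (measurable_fibers_locally_constant
  (S := fun o : option 'I_J => if o is Some j then B j else ~` @cube R d)).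
- by case=> [j|]; [exact: measurable_bin | exact: measurableC measurable_cube].
- by move=> v; have [/cube_sub_bins[j Bjv]|ncv] := pselect (cube v);
    [exists (Some j) | exists None].
- case=> [j|]; [exists (g (m j)) | exists (g (tzero R d))] => v /=.
    by move=> Bjv; rewrite (pw_const_bin Bjv).
  by move=> ncv; rewrite pw_const_out.
Qed.

End pw_const.

End partition.

Section bins.
Context (R : realType) (d : nat) (dO : measure_display) (Omega : measurableType dO)
  (P : probability Omega R) (V : Omega -> d.-tuple R)
  (mV : measurable_fun setT V) (cV : forall w, cube (V w))
  (J : nat) (B : 'I_J -> set (d.-tuple R)) (hB : measurable_partition B).

Lemma bounded_measurable_tnth (Z : Omega -> d.-tuple R) i :
  measurable_fun setT Z -> (forall w, cube (Z w)) ->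
  bounded_measurable (fun w => tnth (Z w) i).
Proof.
move=> mZ cZ; split; first exact: measurableT_comp (measurable_tnth i) mZ.
by exists 1 => w; have /andP[Zi0 Zi1] := cZ w i; rewrite ger0_norm.
Qed.

Lemma bounded_measurable_indic_bin j :
  bounded_measurable (fun w => \1_(B j) (V w) : R).
Proof. exact: bounded_measurable_indic mV (measurable_bin hB j). Qed.

Lemma Eon_expectR (S : set (d.-tuple R)) g : measurable S -> bounded_measurable g ->
  Eon P V S g = (expectR P (fun w => \1_S (V w) * g w))%:E.
Proof.
move=> mS bg; rewrite /Eon expectRE //.
by apply: bounded_measurableM bg; exact: bounded_measurable_indic.
Qed.

Lemma Eon_subr0_eq (S : set (d.-tuple R)) (Z Z' : Omega -> R) :
  measurable S -> bounded_measurable Z -> bounded_measurable Z' ->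
  Eon P V S (fun w => Z w - Z' w) = 0%E -> Eon P V S Z = Eon P V S Z'.
Proof.
move=> mS bZ bZ'; have bS := bounded_measurable_indic mV mS.
rewrite !Eon_expectR //; last exact: bounded_measurableB.
under eq_fun do rewrite mulrBr.
rewrite expectRB; [|exact: bounded_measurableM ..].
by move=> [/eqP]; rewrite subr_eq0 => /eqP ->.
Qed.

Lemma expectR_split_bins g : bounded_measurable g ->
  expectR P g = \sum_j expectR P (fun w => \1_(B j) (V w) * g w).
Proof.
move=> bg; rewrite -expectR_sum => [|j]; last first.
  exact: bounded_measurableM (bounded_measurable_indic_bin j) bg.
by congr expectR; apply: funext => w; rewrite -mulr_suml sum_indic_bins // mul1r.
Qed.

Definition bin_prob j := fine (P (V @^-1` B j)).

Lemma measurable_preimage_bin j : measurable (V @^-1` B j).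
Proof. by rewrite -[X in measurable X]setTI; apply: mV => //; exact: measurable_bin. Qed.

Lemma expectR_indic_bin j : expectR P (fun w => \1_(B j) (V w)) = bin_prob j.
Proof.
rewrite /bin_prob -expectR_indic; last exact: measurable_preimage_bin.
by congr expectR; apply: funext => w; rewrite !indicE.
Qed.

Hypothesis bin_pos : forall j, (0 < P (V @^-1` B j))%E.

Lemma bin_prob_gt0 j : 0 < bin_prob j.
Proof.
rewrite fine_gt0 // bin_pos /= ltey_eq fin_num_measure //.
exact: measurable_preimage_bin.
Qed.

Definition bin_mean j := cond_mean P V (B j) V.

Lemma expectR_bin_coord j i :
  expectR P (fun w => \1_(B j) (V w) * tnth (V w) i) = tnth (bin_mean j) i * bin_prob j.
Proof.
rewrite tnth_mktuple Eon_expectR /= -/(bin_prob j) ?divfK ?gt_eqF ?bin_prob_gt0 //.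
  exact: measurable_bin.
exact: bounded_measurable_tnth.
Qed.

Lemma bin_mean_cube j : cube (bin_mean j).
Proof.
move=> i; have p0 := bin_prob_gt0 j.
have -> : tnth (bin_mean j) i =
    expectR P (fun w => \1_(B j) (V w) * tnth (V w) i) / bin_prob j.
  by rewrite expectR_bin_coord mulfK // gt_eqF.
have bjV := bounded_measurableM (bounded_measurable_indic_bin j)
  (bounded_measurable_tnth i mV cV).
apply/andP; split.
  apply: divr_ge0; last exact: ltW.
  rewrite -{1}(expectR_cst P 0); apply: le_expectR => // [|w].
    exact: bounded_measurable_cst.
  by have /andP[Vi0 _] := cV w i; rewrite mulr_ge0.
rewrite ler_pdivrMr // mul1r -expectR_indic_bin.
apply: le_expectR => // [|w]; first exact: bounded_measurable_indic_bin.
have /andP[Vi0 Vi1] := cV w i; rewrite indicE.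
by case: (_ \in _); rewrite ?mul1r ?mul0r.
Qed.

Lemma bin_mean_calibrated (Y : Omega -> d.-tuple R) :
  measurable_fun setT Y -> (forall w, cube (Y w)) ->
  (forall j i, Eon P V (B j) (fun w => tnth (Y w) i - tnth (V w) i) = 0%E) ->
  forall j, bin_mean j = cond_mean P V (B j) Y.
Proof.
move=> mY cY cal j; apply: eq_from_tnth => i; rewrite !tnth_mktuple.
congr (fine _ / _); apply/esym/Eon_subr0_eq; last exact: cal.
- exact: measurable_bin.
- exact: bounded_measurable_tnth.
- exact: bounded_measurable_tnth.
Qed.

Lemma Qset_comp q : Qset P V B q ->
  measurable_fun setT (q \o V) /\ forall w, cube (q (V w)).
Proof.
case=> mq qcube _; split; first exact: measurableT_comp mq mV.
by move=> w; apply: qcube; exists (V w).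
Qed.

Lemma expectR_bin_coord_Qset q j i : Qset P V B q ->
  expectR P (fun w => \1_(B j) (V w) * tnth (q (V w)) i) =
  tnth (bin_mean j) i * bin_prob j.
Proof.
move=> Qq; have [mq cq] := Qset_comp Qq; case: Qq => _ _ /(_ j i) Qq.
rewrite -expectR_bin_coord; apply: EFin_inj.
rewrite -!Eon_expectR; try exact: measurable_bin; try exact: bounded_measurable_tnth.
by apply: Eon_subr0_eq Qq; [exact: measurable_bin | exact: bounded_measurable_tnth ..].
Qed.

Section robust.
Context (A : finType) (a0 : A) (u : A -> d.-tuple R -> R) (hu : linear_in_v u).

Lemma bounded_measurable_util (Z : Omega -> d.-tuple R) b :
  measurable_fun setT Z -> (forall w, cube (Z w)) ->
  bounded_measurable (fun w => u b (Z w)).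
Proof.
move=> mZ cZ; under eq_fun do rewrite (linear_in_v_coordE hu).
apply: bounded_measurable_sum => i.
by apply: bounded_measurableM; [exact: bounded_measurable_tnth | exact: bounded_measurable_cst].
Qed.

Lemma bounded_measurable_max_util (Z : Omega -> d.-tuple R) :
  measurable_fun setT Z -> (forall w, cube (Z w)) ->
  bounded_measurable (fun w => max_util a0 u (Z w)).
Proof.
move=> mZ cZ; have [K uK] := linear_in_v_bounded_cube hu.
split; last by exists K => w; exact: uK.
under eq_fun do rewrite max_util_bigmax.
elim: (index_enum A) => [|b s ih].
  by under eq_fun do rewrite big_nil; case: (bounded_measurable_util a0 mZ cZ).
under eq_fun do rewrite big_cons.
by apply: measurable_maxr => //; case: (bounded_measurable_util b mZ cZ).
Qed.

Lemma bounded_measurable_policy_util (a : d.-tuple R -> A) (Z : Omega -> d.-tuple R) :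
  measurable_policy a -> measurable_fun setT Z -> (forall w, cube (Z w)) ->
  bounded_measurable (fun w => u (a (V w)) (Z w)).
Proof.
move=> ma mZ cZ; have [K uK] := linear_in_v_bounded_cube hu.
split; last by exists K => w; exact: uK.
apply: (measurable_fun_fiberwise (a := a \o V) (F := fun b w => u b (Z w))).
  by move=> b; rewrite comp_preimage -[X in measurable X]setTI; exact: mV.
by move=> b; case: (bounded_measurable_util b mZ cZ).
Qed.

(* only the bin means of [q] enter, by linearity of [u] in the belief *)
Lemma expectR_bin_util_Qset q j b : Qset P V B q ->
  expectR P (fun w => \1_(B j) (V w) * u b (q (V w))) = bin_prob j * u b (bin_mean j).
Proof.
move=> Qq; have [mq cq] := Qset_comp Qq.
have bjq i : bounded_measurable (fun w => \1_(B j) (V w) * tnth (q (V w)) i).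
  apply: bounded_measurableM; first exact: bounded_measurable_indic_bin.
  exact: bounded_measurable_tnth.
under eq_fun do rewrite (linear_in_v_coordE hu) mulr_sumr.
rewrite expectR_sum => [|i]; last first.
  under eq_fun do rewrite mulrA.
  exact: bounded_measurableM (bjq i) (bounded_measurable_cst _).
rewrite (linear_in_v_coordE hu _ (bin_mean j)) mulr_sumr; apply: eq_bigr => i _.
under eq_fun do rewrite mulrA mulrC.
by rewrite expectRZl // expectR_bin_coord_Qset //; ring.
Qed.

Definition qstar := pw_const B bin_mean.

Lemma measurable_qstar_comp : measurable_fun setT (qstar \o V).
Proof. exact: measurableT_comp (measurable_pw_const hB _) mV. Qed.

Lemma qstar_cube w : cube (qstar (V w)).
Proof. by apply: pw_const_cube => //; exact: bin_mean_cube. Qed.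

Lemma Qset_qstar : Qset P V B qstar.
Proof.
split; first exact: measurable_pw_const.
  by move=> _ [v cv <-]; apply: pw_const_cube => //; exact: bin_mean_cube.
move=> j i; rewrite Eon_expectR; first congr EFin; last 2 first.
- exact: measurable_bin.
- by apply: bounded_measurableB; apply: bounded_measurable_tnth => //;
    [exact: measurable_qstar_comp | exact: qstar_cube].
under eq_fun do
  rewrite (indic_bin_mul_pw_const hB bin_mean (fun t => tnth t i - tnth (V _) i)) mulrBr.
rewrite expectRB ?expectR_bin_coord; last 2 first.
- exact: bounded_measurableM (bounded_measurable_indic_bin j) (bounded_measurable_cst _).
- exact: bounded_measurableM (bounded_measurable_indic_bin j) (bounded_measurable_tnth i mV cV).
under eq_fun do rewrite mulrC.
by rewrite expectRZl ?expectR_indic_bin ?subrr //; exact: bounded_measurable_indic_bin.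
Qed.

Definition bin_value := \sum_j bin_prob j * max_util a0 u (bin_mean j).

Lemma expectR_max_util_qstar :
  expectR P (fun w => max_util a0 u (qstar (V w))) = bin_value.
Proof.
rewrite expectR_split_bins; last first.
  exact: bounded_measurable_max_util measurable_qstar_comp qstar_cube.
apply: eq_bigr => j _.
under eq_fun do rewrite (indic_bin_mul_pw_const hB bin_mean (max_util a0 u)) mulrC.
rewrite expectRZl; last exact: bounded_measurable_indic_bin.
by rewrite expectR_indic_bin mulrC.
Qed.

Lemma bin_value_le_max_util q : Qset P V B q ->
  bin_value <= expectR P (fun w => max_util a0 u (q (V w))).
Proof.
move=> Qq; have [mq cq] := Qset_comp Qq.
rewrite expectR_split_bins; last exact: bounded_measurable_max_util.
apply: ler_sum => j _; rewrite /max_util -(expectR_bin_util_Qset _ _ Qq).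
apply: le_expectR => [||w].
- exact: bounded_measurableM (bounded_measurable_indic_bin j) (bounded_measurable_util _ mq cq).
- exact: bounded_measurableM (bounded_measurable_indic_bin j) (bounded_measurable_max_util mq cq).
by apply: ler_wpM2l; [rewrite indicE | exact: le_max_util].
Qed.

Lemma worst_objE q : measurable_fun setT (q \o V) -> (forall w, cube (q (V w))) ->
  worst_obj P V u q = (expectR P (fun w => max_util a0 u (q (V w))))%:E.
Proof.
move=> mq cq; rewrite /worst_obj; under eq_integral do rewrite (vmaxE a0).
by rewrite expectRE //; exact: bounded_measurable_max_util.
Qed.

Lemma qstar_worst_case q : Qset P V B q -> (worst_obj P V u qstar <= worst_obj P V u q)%E.
Proof.
move=> Qq; have [mq cq] := Qset_comp Qq.
rewrite (worst_objE measurable_qstar_comp qstar_cube) (worst_objE mq cq) lee_fin.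
by rewrite expectR_max_util_qstar; exact: bin_value_le_max_util.
Qed.

Definition astar := best_resp a0 u \o qstar.

Lemma astar_bin j v : B j v -> astar v = best_resp a0 u (bin_mean j).
Proof. by move=> Bjv; rewrite /astar /= /qstar (pw_const_bin hB _ Bjv). Qed.

Lemma astar_best_response j v b : B j v -> u b (bin_mean j) <= u (astar v) (bin_mean j).
Proof. by move=> Bjv; rewrite (astar_bin Bjv); exact: le_max_util. Qed.

Lemma measurable_policy_astar : measurable_policy astar.
Proof. exact: measurable_policy_comp_pw_const. Qed.

Lemma payoffE a q : measurable_policy a ->
  measurable_fun setT (q \o V) -> (forall w, cube (q (V w))) ->
  payoff P V u a q = (expectR P (fun w => u (a (V w)) (q (V w))))%:E.
Proof. by move=> ma mq cq; rewrite /payoff expectRE //; exact: bounded_measurable_policy_util. Qed.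

(* [astar] is an equalizer: its payoff is the same against every belief of [Qset] *)
Lemma expectR_astar_Qset q : Qset P V B q ->
  expectR P (fun w => u (astar (V w)) (q (V w))) = bin_value.
Proof.
move=> Qq; have [mq cq] := Qset_comp Qq.
rewrite expectR_split_bins; last first.
  exact: bounded_measurable_policy_util measurable_policy_astar mq cq.
apply: eq_bigr => j _; rewrite /max_util -(expectR_bin_util_Qset j _ Qq); congr expectR.
apply: funext => w; have [Bj|nBj] := pselect (B j (V w)).
  by rewrite (astar_bin Bj).
by rewrite indicE memNset // !mul0r.
Qed.

Lemma expectR_qstar_le a : measurable_policy a ->
  expectR P (fun w => u (a (V w)) (qstar (V w))) <= bin_value.
Proof.
move=> ma; rewrite -expectR_max_util_qstar; apply: le_expectR => [||w].
- exact: bounded_measurable_policy_util ma measurable_qstar_comp qstar_cube.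
- exact: bounded_measurable_max_util measurable_qstar_comp qstar_cube.
exact: le_max_util.
Qed.

Lemma bin_value_le_robust_value_astar : (bin_value%:E <= robust_value P V u B astar)%E.
Proof.
apply: le_ereal_inf_tmp => _ [q Qq <-]; have [mq cq] := Qset_comp Qq.
by rewrite payoffE ?expectR_astar_Qset //; exact: measurable_policy_astar.
Qed.

Lemma robust_value_le_payoff a q : Qset P V B q ->
  (robust_value P V u B a <= payoff P V u a q)%E.
Proof. by move=> Qq; apply: ge_ereal_inf; exists (payoff P V u a q) => //; exists q. Qed.

Lemma robust_value_le_bin_value a : measurable_policy a ->
  (robust_value P V u B a <= bin_value%:E)%E.
Proof.
move=> ma; apply: le_trans (robust_value_le_payoff a Qset_qstar) _.
rewrite payoffE ?lee_fin ?expectR_qstar_le //; first exact: measurable_qstar_comp.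
exact: qstar_cube.
Qed.

Lemma astar_robust_optimal : robust_optimal P V u B astar.
Proof.
split=> [|a ma]; first exact: measurable_policy_astar.
exact: le_trans (robust_value_le_bin_value ma) bin_value_le_robust_value_astar.
Qed.

Lemma robust_optimal_regret_le0 a : robust_optimal P V u B a ->
  expectR P (fun w => max_util a0 u (qstar (V w)) - u (a (V w)) (qstar (V w))) <= 0.
Proof.
move=> [ma opt].
have bau := bounded_measurable_policy_util ma measurable_qstar_comp qstar_cube.
rewrite expectRB //; last exact: bounded_measurable_max_util measurable_qstar_comp qstar_cube.
rewrite expectR_max_util_qstar subr_le0 -lee_fin -payoffE //; last 2 first.
- exact: measurable_qstar_comp.
- exact: qstar_cube.
apply: le_trans (robust_value_le_payoff a Qset_qstar).
exact: le_trans bin_value_le_robust_value_astar (opt _ measurable_policy_astar).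
Qed.

(* the regret against [qstar] is at least the smallest positive gap on the set
   where [a] fails to best-respond, so that set is null *)
Lemma robust_optimal_best_response_ae a : robust_optimal P V u B a -> forall j,
  {ae pushforward P V, forall v,
     B j v -> forall b, u b (bin_mean j) <= u (a v) (bin_mean j)}.
Proof.
move=> opta j; have ma := opta.1; set m := bin_mean j.
have [e e0 gap] := max_util_gap a0 u m.
pose N := B j `&` [set v | u (a v) m < max_util a0 u m].
have mN : measurable N.
  apply: measurableI; first exact: measurable_bin.
  have mam : measurable_fun setT (fun v => u (a v) m).
    exact: (measurable_fun_fiberwise (F := fun b _ => u b m)).
  have := mam measurableT _ (measurable_itv `]-oo, max_util a0 u m[); rewrite setTI.
  by congr measurable; apply/seteqP; split => v /=; rewrite in_itv.
have PN : P (V @^-1` N) = 0%E.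
  apply: (null_set_expectR_le0 e0 _ _ _ (robust_optimal_regret_le0 opta)).
  - by rewrite -[X in measurable X]setTI; exact: mV.
  - apply: bounded_measurableB.
      exact: bounded_measurable_max_util measurable_qstar_comp qstar_cube.
    exact: bounded_measurable_policy_util ma measurable_qstar_comp qstar_cube.
  move=> w; have [[Bj lt_am]|nN] := pselect (N (V w)).
    by rewrite indicE mem_set // mulr1 /qstar (pw_const_bin hB _ Bj) gap.
  by rewrite indicE memNset // mulr0 subr_ge0 le_max_util.
exists N; split => // v /= nbr; split.
  by apply: contrapT => nBj; apply: nbr => /nBj.
apply: contrapT => /negP; rewrite -leNgt => ge_am; apply: nbr => _ b.
exact: le_trans (le_max_util _ _ b _) ge_am.
Qed.

End robust.

End bins.

Theorem proposition2
  (R : realType) (d : nat)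
  (dO : measure_display) (Omega : measurableType dO) (P : probability Omega R)
  (dX : measure_display) (TX : measurableType dX)
  (X : Omega -> TX) (Y : Omega -> d.-tuple R) (f : TX -> d.-tuple R)
  (A : finType) (u : A -> d.-tuple R -> R)
  (J : nat) (B : 'I_J -> set (d.-tuple R)) :
  measurable_fun [set: Omega] X ->
  measurable_fun [set: Omega] Y ->
  (forall w, cube (Y w)) ->
  measurable_fun [set: TX] f ->
  (forall x, cube (f x)) ->
  (0 < #|A|)%N ->
  linear_in_v u ->
  measurable_partition B ->
  (* bins have positive probability under the law of f(X) *)
  (forall j, (0 < P ((f \o X) @^-1` B j))%E) ->
  (* H_bin-calibration *)
  (forall (j : 'I_J) (i : 'I_d),
     Eon P (f \o X) (B j) (fun w => tnth (Y w) i - tnth (f (X w)) i) = 0%E) ->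
  let m := fun j => cond_mean P (f \o X) (B j) (f \o X) in
  let qstar := pw_const B m in
  (* m_j = E[f(X) | f(X) in B_j] = E[Y | f(X) in B_j] *)
  (forall j, m j = cond_mean P (f \o X) (B j) Y) /\
  (* the piecewise-constant belief q*(v) = m_j on B_j is a worst-case belief *)
  (Qset P (f \o X) B qstar /\
   forall q, Qset P (f \o X) B q ->
     (worst_obj P (f \o X) u qstar <= worst_obj P (f \o X) u q)%E) /\
  (* there is a robust-optimal policy best-responding to the bin mean on every
     bin, and every robust-optimal policy best-responds to the bin mean a.e.
     (w.r.t. the law of f(X)) *)
  (exists a, robust_optimal P (f \o X) u B a /\
     forall (j : 'I_J) v, B j v -> forall b : A, u b (m j) <= u (a v) (m j)) /\
  (forall a : d.-tuple R -> A,
     robust_optimal P (f \o X) u B a ->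
     forall j : 'I_J,
       {ae pushforward P (f \o X), forall v,
          B j v -> forall b : A, u b (m j) <= u (a v) (m j)}).
Proof.
move=> mX mY cY mf cf /card_gt0P[a0 _] hu hB pos cal m qstar.
have mV : measurable_fun setT (f \o X) := measurableT_comp mf mX.
have cV w : cube ((f \o X) w) := cf (X w).
split; first exact: (bin_mean_calibrated mV cV hB mY cY cal).
split; first split.
- exact: (Qset_qstar mV cV hB pos).
- exact: (qstar_worst_case mV cV hB pos a0 hu).
split.
  exists (astar P (f \o X) B a0 u); split.
  - exact: (astar_robust_optimal mV cV hB pos a0 hu).
  - by move=> j v Bjv b; exact: astar_best_response.
exact: (robust_optimal_best_response_ae mV cV hB pos a0 hu).
Qed.
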